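(* Let $m\ge 0$ and $Z\ge 1$ be integers and let $\gamma,\kappa\ge 2$ be integers with $\gamma\kappa>\gamma+\kappa$. Consider pairs $(\mathbf P,\mathbf L)$ with $\mathbf P\in\{0,\ldots,m\}^{\gamma\times\kappa}$ and $\mathbf L\in\mathbb{Z}_Z^{\gamma\times\kappa}$. For $1\le i_1<i_2\le\gamma$ and $1\le j_1<j_2\le\kappa$, call the 4-cycle candidate $(i_1,i_2,j_1,j_2)$ active under $(\mathbf P,\mathbf L)$ if both $$\mathbf P(i_1,j_1)+\mathbf P(i_2,j_2)=\mathbf P(i_1,j_2)+\mathbf P(i_2,j_1)$$ and $$\mathbf L(i_1,j_1)+\mathbf L(i_2,j_2)\equiv\mathbf L(i_1,j_2)+\mathbf L(i_2,j_1)\pmod Z.$$ Let $N$ be the number of pairs $(\mathbf P,\mathbf L)$ under which no 4-cycle candidate is active. Let $\Delta=(2\gamma-3)(2\kappa-3)$, $I=\frac{(\Delta-1)^{\Delta-1}}{\Delta^{\Delta}}$ and $II=\frac{27}{256(\gamma\kappa-\gamma-\kappa)}$. If $$\frac{2m^2+4m+3}{3(m+1)^3Z}\le\max\{I,II\},$$ then $$N\ \ge\ [Z(m+1)]^{\gamma\kappa}\times\begin{cases}\left(1-\frac{2}{\Delta}\right)^{\binom{\gamma}{2}\binom{\kappa}{2}}, & \text{if } I>II,\\[2pt] \left(1-\frac{\gamma\kappa-\gamma-\kappa+1}{4(\gamma\kappa-\gamma-\kappa)}\right)^{\gamma\kappa}, & \text{otherwise.}\end{cases}$$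
   Context: This is the setting of uniform edge spreading (each entry of the partition matrix $\mathbf P$ uniform on $\{0,\ldots,m\}$, $m$ the coupling memory) and uniform lifting (each lifting shift uniform on $\mathbb{Z}_Z$) for a QC-SC-LDPC code from the all-ones $\gamma\times\kappa$ base matrix; the displayed activation conditions are the conditions for a base-graph 4-cycle to survive edge spreading and $Z$-lifting. *)

From HB Require Import structures.
From mathcomp Require Import all_boot all_order all_algebra.
Set Implicit Arguments. Unset Strict Implicit. Unset Printing Implicit Defensive.
Import Order.TTheory GRing.Theory Num.Theory.

Definition pmat (gamma kappa m : nat) := {ffun 'I_gamma * 'I_kappa -> 'I_m.+1}.
Definition lmat (gamma kappa Z : nat) := {ffun 'I_gamma * 'I_kappa -> 'I_Z}.

Definition active (gamma kappa m Z : nat) (P : pmat gamma kappa m) (L : lmat gamma kappa Z)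
  (i1 i2 : 'I_gamma) (j1 j2 : 'I_kappa) : bool :=
  ((P (i1, j1) + P (i2, j2) == P (i1, j2) + P (i2, j1))%N) &&
  ((L (i1, j1) + L (i2, j2) == L (i1, j2) + L (i2, j1) %[mod Z])%N).

Definition no_active (gamma kappa m Z : nat) (PL : pmat gamma kappa m * lmat gamma kappa Z) : bool :=
  [forall i1 : 'I_gamma, forall i2 : 'I_gamma, forall j1 : 'I_kappa, forall j2 : 'I_kappa,
     ((i1 < i2)%N && (j1 < j2)%N) ==> ~~ active PL.1 PL.2 i1 i2 j1 j2].

Definition Ncount (gamma kappa m Z : nat) : nat :=
  #|[set PL : pmat gamma kappa m * lmat gamma kappa Z | no_active PL]|.

Local Open Scope ring_scope.

Definition Delta (gamma kappa : nat) : nat := ((2 * gamma - 3) * (2 * kappa - 3))%N.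

Definition boundI (gamma kappa : nat) : rat :=
  let D := Delta gamma kappa in
  ((D%:R - 1) ^+ (D.-1)) / (D%:R ^+ D).

Definition boundII (gamma kappa : nat) : rat :=
  27%:R / (256%:R * (gamma * kappa - gamma - kappa)%N%:R).

From HB Require Import structures.
From mathcomp Require Import all_boot all_order all_algebra.
From mathcomp Require Import zify lra.

(* Fill the arrays cell by cell in row-major order.  When cell (i, j) is
   reached, each of the i * j candidates with (i, j) as bottom-right corner
   forbids at most one of the Z(m+1) possible entries there, because both
   activation equations determine that entry (the second one modulo Z).  Hence
   N >= prod_(i,j) (Z(m+1) - ij).  Each factor is at least Z(m+1)(1 - 2/Delta)^ij
   by Bernoulli's inequality once 4 Delta <= 3 Z(m+1), and at least
   Z(m+1)(1 - (K+1)/(4K)) with K = gamma kappa - gamma - kappa once 4K <= Z(m+1).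
   Since the activation probability (2m^2+4m+3)/(3(m+1)^3 Z) is at least
   2/(3(m+1)Z) and I <= 1/(2 Delta), the hypothesis gives the first size
   condition when I > II and the second otherwise. *)

Set Implicit Arguments.
Unset Strict Implicit.
Unset Printing Implicit Defensive.

Definition ffun_upd {I : finType} {V : Type} (f : {ffun I -> V}) (i : I) (v : V) :
  {ffun I -> V} := [ffun j => if j == i then v else f j].

Section GreedyCount.

Variables (I V : finType) (v0 : V) (r : I -> nat).
Hypothesis r_inj : injective r.
Variables (ok : I -> {ffun I -> V} -> bool) (c : I -> nat).
Hypothesis ok_prefix :
  forall i (f g : {ffun I -> V}), (forall j, r j <= r i -> f j = g j) -> ok i f = ok i g.
Hypothesis ok_choices : forall i f, c i <= #|[set v | ok i (ffun_upd f i v)]|.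

(* Entries of rank >= k are pinned to [v0], so that setting the entry of
   rank k is injective on [good_prefix k]. *)
Definition good_prefix k := [set f : {ffun I -> V} |
  [forall i, (r i < k) ==> ok i f] && [forall j, (k <= r j) ==> (f j == v0)]].

Lemma good_prefix_upd k i f v : r i = k -> f \in good_prefix k ->
  ok i (ffun_upd f i v) -> ffun_upd f i v \in good_prefix k.+1.
Proof.
move=> ri; rewrite !inE => /andP[/forallP f_ok /forallP f_v0] ok_i.
apply/andP; split; apply/forallP => j; apply/implyP => rj.
- have [->//|ji] := eqVneq j i.
  have rj_lt : r j < k.
    have : r j != k by rewrite -ri (inj_eq r_inj).
    lia.
  rewrite (@ok_prefix j _ f); first by have := f_ok j; rewrite rj_lt.
  by move=> l rl; rewrite ffunE; have [eli|//] := eqVneq l i; subst l; lia.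
- rewrite ffunE; have [eji|_] := eqVneq j i; first by subst j; lia.
  by have := f_v0 j; rewrite ltnW.
Qed.

Lemma good_prefix_upd_inj k i f g v w : r i = k ->
  f \in good_prefix k -> g \in good_prefix k ->
  ffun_upd f i v = ffun_upd g i w -> (f, v) = (g, w).
Proof.
move=> ri; rewrite !inE => /andP[_ /forallP f_v0] /andP[_ /forallP g_v0] E.
have fgi : f i = g i.
  by have := f_v0 i; have := g_v0 i; rewrite ri leqnn => /eqP -> /eqP ->.
have := congr1 (fun h : {ffun I -> V} => h i) E; rewrite !ffunE eqxx => vw.
congr pair => //; apply/ffunP => j; have [->//|ji] := eqVneq j i.
by have := congr1 (fun h : {ffun I -> V} => h j) E; rewrite !ffunE (negPf ji).
Qed.

Lemma good_prefix_step k :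
  (\prod_(i | r i == k) c i) * #|good_prefix k| <= #|good_prefix k.+1|.
Proof.
have [i /eqP ri | no_rank] := pickP (fun i => r i == k); last first.
  rewrite big_pred0 // mul1n; apply: subset_leq_card; apply/subsetP => f.
  rewrite !inE => /andP[/forallP f_ok /forallP f_v0].
  apply/andP; split; apply/forallP => j; apply/implyP => rj.
    have rj_lt : r j < k by have := no_rank j; rewrite /= => /negbT; lia.
    by have := f_ok j; rewrite rj_lt.
  by have := f_v0 j; rewrite ltnW.
rewrite (big_pred1 i); last first.
  by move=> j /=; rewrite -ri (inj_eq r_inj).
set A := [set p : {ffun I -> V} * V | (p.1 \in good_prefix k) && ok i (ffun_upd p.1 i p.2)].
have card_A : c i * #|good_prefix k| <= #|A|.
  rewrite mulnC -sum_nat_const -sum1_card.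
  rewrite (eq_bigl (fun p => (p.1 \in good_prefix k) && ok i (ffun_upd p.1 i p.2)));
    last by move=> p; rewrite inE.
  rewrite -(pair_big_dep (fun f => f \in good_prefix k) (fun f v => ok i (ffun_upd f i v))
                         (fun _ _ => 1)) /=.
  apply: leq_sum => f _; apply: leq_trans (ok_choices i f) _.
  by rewrite -sum1_card; apply/eq_leq/eq_bigl => v; rewrite inE.
apply: leq_trans card_A _.
have inj : {in A &, injective (fun p => ffun_upd p.1 i p.2)}.
  move=> [f v] [g w]; rewrite [(f, v) \in A]inE [(g, w) \in A]inE.
  move=> /andP[fk _] /andP[gk _]; exact: (good_prefix_upd_inj ri fk gk).
rewrite -(card_in_imset inj); apply: subset_leq_card; apply/subsetP => h /imsetP[p].
by rewrite inE => /andP[pk ok_p] ->; apply: good_prefix_upd.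
Qed.

Lemma good_prefix_card k : \prod_(i | r i < k) c i <= #|good_prefix k|.
Proof.
elim: k => [|k IHk].
  rewrite big_pred0 // -(cards1 ([ffun=> v0] : {ffun I -> V})).
  apply/subset_leq_card; rewrite sub1set inE.
  by apply/andP; split; apply/forallP => j; rewrite ?ffunE ?eqxx ?implybT.
rewrite (bigID (fun i => r i == k)) /=.
rewrite (eq_bigl (fun i => r i == k)); last first.
  by move=> i; case: eqVneq => [->|]; rewrite ?ltnSn ?andbF.
rewrite [X in _ * X](eq_bigl (fun i => r i < k)); last first.
  by move=> i; rewrite ltnS ltn_neqAle andbC.
by apply: leq_trans (good_prefix_step k); rewrite leq_mul2l IHk orbT.
Qed.

Lemma prod_le_card_ok : \prod_i c i <= #|[set f : {ffun I -> V} | [forall i, ok i f]]|.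
Proof.
pose n := \max_i (r i).+1.
have r_lt i : r i < n by exact: (@leq_bigmax I (fun i => (r i).+1) i).
apply: leq_trans (_ : #|good_prefix n| <= _).
  by rewrite -(eq_bigl _ _ r_lt); exact: good_prefix_card.
apply: subset_leq_card; apply/subsetP => f; rewrite !inE => /andP[/forallP f_ok _].
by apply/forallP => i; have := f_ok i; rewrite r_lt.
Qed.

End GreedyCount.

Lemma ord_eq_modDl (Z a s : nat) (x y : 'I_Z) :
  a + x = s %[mod Z] -> a + y = s %[mod Z] -> x = y.
Proof.
move=> ax ay; apply: val_inj => /=; rewrite -(modn_small (ltn_ord x)) -(modn_small (ltn_ord y)).
by apply/eqP; rewrite -(eqn_modDl a) ax ay.
Qed.

Lemma card_bigcup_le (J T : finType) (P : pred J) (S : J -> {set T}) :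
  #|\bigcup_(j | P j) S j| <= \sum_(j | P j) #|S j|.
Proof.
elim/big_rec2: _ => [|j n U _ IH]; first by rewrite cards0.
by apply: leq_trans (leq_card_setU _ _) _; rewrite leq_add2l.
Qed.

Lemma card_ord_lt n k : k <= n -> #|[set x : 'I_n | x < k]| = k.
Proof.
move=> kn; have widen_inj : injective (widen_ord kn) by move=> y z [] /val_inj.
have -> : [set x : 'I_n | x < k] = widen_ord kn @: 'I_k.
  apply/setP => x; rewrite inE; apply/idP/imsetP => [xk | [y _ ->]]; last exact: (ltn_ord y).
  by exists (Ordinal xk); last apply: val_inj.
by rewrite card_imset // card_ord.
Qed.

Section CycleFreeArrays.

Variables (gamma kappa m Z : nat).
Hypothesis Z_gt0 : 0 < Z.

Local Notation cell := ('I_gamma * 'I_kappa)%type.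
Local Notation entry := ('I_m.+1 * 'I_Z)%type.
Local Notation array := {ffun cell -> entry}.

Definition pmat_of (f : array) : pmat gamma kappa m := [ffun x => (f x).1].
Definition lmat_of (f : array) : lmat gamma kappa Z := [ffun x => (f x).2].

Definition corner_free (x : cell) (f : array) : bool :=
  [forall y : cell, ((y.1 < x.1) && (y.2 < x.2)) ==>
     ~~ active (pmat_of f) (lmat_of f) y.1 x.1 y.2 x.2].

Definition cell_rank (x : cell) : nat := x.1 * kappa + x.2.

Lemma cell_rank_inj : injective cell_rank.
Proof.
move=> [i j] [i' j']; rewrite /cell_rank /= => E.
have := ltn_ord j; have := ltn_ord j' => hj' hj.
have ii' : i = i' :> nat by nia.
have jj' : j = j' :> nat by nia.
by congr pair; apply: val_inj.
Qed.

Lemma corner_free_prefix x (f g : array) :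
  (forall y, cell_rank y <= cell_rank x -> f y = g y) -> corner_free x f = corner_free x g.
Proof.
case: x => i j fg; apply: eq_forallb => -[i1 j1] /=.
case: (boolP ((i1 < i) && (j1 < j))) => //= /andP[i1i j1j].
have := ltn_ord j; have := ltn_ord j1 => hj1 hj.
by rewrite /active !ffunE !fg // /cell_rank /=; nia.
Qed.

Lemma active_corner_uniq (x y : cell) (f : array) (v w : entry) :
  y.1 < x.1 -> y.2 < x.2 ->
  active (pmat_of (ffun_upd f x v)) (lmat_of (ffun_upd f x v)) y.1 x.1 y.2 x.2 ->
  active (pmat_of (ffun_upd f x w)) (lmat_of (ffun_upd f x w)) y.1 x.1 y.2 x.2 -> v = w.
Proof.
case: x y v w => [i j] [i1 j1] [v1 v2] [w1 w2] /= i1i j1j.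
have i1i' : (i1 == i) = false by apply/negbTE; rewrite -val_eqE neq_ltn i1i.
have j1j' : (j1 == j) = false by apply/negbTE; rewrite -val_eqE neq_ltn j1j.
rewrite /active !ffunE /= !xpair_eqE !eqxx i1i' j1j' /=.
move=> /andP[/eqP Pv /eqP Lv] /andP[/eqP Pw /eqP Lw].
have vw1 : v1 = w1 by apply/val_inj/(addnI (etrans Pv (esym Pw))).
by rewrite vw1 (ord_eq_modDl Lv Lw).
Qed.

Lemma card_not_corner_free (x : cell) (f : array) :
  #|[set v | ~~ corner_free x (ffun_upd f x v)]| <= x.1 * x.2.
Proof.
pose Q := setX [set y : 'I_gamma | y < x.1] [set y : 'I_kappa | y < x.2].
pose S (y : cell) := [set v : entry |
  active (pmat_of (ffun_upd f x v)) (lmat_of (ffun_upd f x v)) y.1 x.1 y.2 x.2].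
have S_le1 y : y \in Q -> #|S y| <= 1.
  rewrite !inE => /andP[y1x y2x]; apply/card_le1_eqP => v w; rewrite !inE => Sv Sw.
  exact: active_corner_uniq y1x y2x Sw Sv.
apply: leq_trans (_ : #|\bigcup_(y in Q) S y| <= _).
  apply/subset_leq_card/subsetP => v; rewrite inE negb_forall => /existsP[y].
  rewrite negb_imply negbK => /andP[yQ act]; apply/bigcupP; exists y; last by rewrite inE.
  by rewrite !inE.
have -> : x.1 * x.2 = \sum_(y in Q) 1 by rewrite sum1_card cardsX !card_ord_lt // ltnW.
by apply: leq_trans (card_bigcup_le _ _) _; apply: leq_sum.
Qed.

Lemma corner_free_choices (x : cell) (f : array) :
  Z * m.+1 - x.1 * x.2 <= #|[set v | corner_free x (ffun_upd f x v)]|.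
Proof.
have := cardsC [set v | corner_free x (ffun_upd f x v)].
rewrite card_prod !card_ord mulnC => <-; rewrite leq_subLR addnC leq_add2r.
by apply: leq_trans (card_not_corner_free x f); apply/subset_leq_card/subsetP => v; rewrite !inE.
Qed.

Lemma card_corner_free_le_Ncount :
  #|[set f : array | [forall x, corner_free x f]]| <= Ncount gamma kappa m Z.
Proof.
pose split_array (f : array) := (pmat_of f, lmat_of f).
have split_inj : injective split_array.
  move=> f g [/ffunP Pfg /ffunP Lfg]; apply/ffunP => x.
  by move: (Pfg x) (Lfg x); rewrite !ffunE; case: (f x) (g x) => [p l] [p' l'] /= -> ->.
rewrite -(card_imset _ split_inj); apply/subset_leq_card/subsetP => PL /imsetP[f].
rewrite !inE => /forallP f_free ->; apply/forallP => i1; apply/forallP => i2.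
apply/forallP => j1; apply/forallP => j2; apply/implyP => /andP[i12 j12].
by have /forallP/(_ (i1, j1)) := f_free (i2, j2); rewrite /= i12 j12.
Qed.

Lemma prod_le_Ncount : \prod_(x : cell) (Z * m.+1 - x.1 * x.2) <= Ncount gamma kappa m Z.
Proof.
pose v0 : entry := (ord0, Ordinal Z_gt0).
apply: leq_trans card_corner_free_le_Ncount.
exact: (prod_le_card_ok v0 cell_rank_inj corner_free_prefix corner_free_choices).
Qed.

End CycleFreeArrays.

Import Order.TTheory GRing.Theory Num.Theory.
Local Open Scope ring_scope.

Section CellBounds.

Variable R : realFieldType.

Lemma Bernoulli_mul_le1 (a : R) n : 0 <= a <= 1 -> (1 - a) ^+ n * (1 + n%:R * a) <= 1.
Proof.
move=> /andP[a_ge0 a_le1]; elim: n => [|n IHn]; first by rewrite expr0 mul0r addr0 mulr1.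
have x_ge0 : 0 <= (1 - a) ^+ n by rewrite exprn_ge0 // subr_ge0.
have step : (1 - a) * (1 + n.+1%:R * a) <= 1 + n%:R * a.
  have : 0 <= n%:R :> R by rewrite ler0n.
  by rewrite -natr1; nra.
apply: le_trans IHn; rewrite exprS [(1 - a) * _]mulrC -mulrA.
exact: ler_wpM2l.
Qed.

Lemma mul_exp1B_le (M a : R) n : 0 <= a <= 1 -> 1 + n%:R * a <= M * a ->
  M * (1 - a) ^+ n <= M - n%:R.
Proof.
move=> a01 hM; have /andP[a_ge0 a_le1] := a01.
have n_ge0 : 0 <= n%:R :> R by rewrite ler0n.
have p_gt0 : 0 < 1 + n%:R * a by rewrite ltr_pwDl ?mulr_ge0.
have M_ge0 : 0 <= M by nra.
rewrite -(ler_pM2r p_gt0); apply: le_trans (_ : M <= _).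
  by rewrite -mulrA ler_piMr // Bernoulli_mul_le1.
have : 0 <= n%:R * (M * a - 1 - n%:R * a) by rewrite mulr_ge0 //; lra.
nra.
Qed.

Lemma cell_boundI (M D b : nat) : (2 <= D)%N -> (D + 2 * b <= 2 * M)%N ->
  M%:R * (1 - 2%:R / D%:R) ^+ b <= (M - b)%N%:R :> R.
Proof.
move=> D_ge2 hb; have D_gt0 : 0 < D%:R :> R by rewrite ltr0n; lia.
rewrite natrB; last by lia.
apply: mul_exp1B_le.
  by rewrite divr_ge0 ?ler0n //= ler_pdivrMr // mul1r ler_nat.
rewrite -(ler_pM2r D_gt0) mulrDl mul1r -!mulrA mulVf ?gt_eqF // !mulr1.
by rewrite -!natrM -natrD ler_nat; lia.
Qed.

Lemma cell_boundII (M K b : nat) : (0 < K)%N -> (4 * K <= M)%N -> (b <= K + 1)%N ->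
  M%:R * (1 - (K + 1)%N%:R / (4 * K)%N%:R) <= (M - b)%N%:R :> R.
Proof.
move=> K_gt0 KM bK; have K4_gt0 : 0 < (4 * K)%N%:R :> R by rewrite ltr0n; lia.
rewrite natrB; last by lia.
rewrite mulrBr mulr1 lerD2l lerN2 mulrA ler_pdivlMr // -!natrM ler_nat.
nia.
Qed.

End CellBounds.

Lemma Bernoulli_expn k n : (k ^ n * (k + n) <= k * k.+1 ^ n)%N.
Proof.
elim: n => [|n IHn]; first by rewrite !expn0; lia.
rewrite !expnS; move: IHn; set x := (k ^ n)%N; set y := (k.+1 ^ n)%N => IHn; nia.
Qed.

Lemma ler_nat_div (R : numFieldType) (a b c d : nat) : (0 < b)%N -> (0 < d)%N ->
  (a%:R / b%:R <= c%:R / d%:R :> R) = (a * d <= c * b)%N.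
Proof.
move=> b_gt0 d_gt0; rewrite ler_pdivrMr ?ltr0n // mulrAC ler_pdivlMr ?ltr0n //.
by rewrite -!natrM ler_nat.
Qed.

(* With k = Delta - 1 this is (1 + 1/k)^k >= 2. *)
Lemma boundI_le_inv gamma kappa : (2 <= Delta gamma kappa)%N ->
  boundI gamma kappa <= 1%:R / (2 * Delta gamma kappa)%N%:R.
Proof.
rewrite /boundI; case: (Delta gamma kappa) => [|[|k]] //= _.
have -> : k.+2%:R - 1 = k.+1%:R :> rat by rewrite -natr1 addrK.
rewrite -!natrX ler_nat_div ?expn_gt0 // mul1n.
by have := Bernoulli_expn k.+1 k.+1; rewrite [(_ ^ k.+2)%N]expnS; nia.
Qed.

Lemma active_ratio_ge m Z : (0 < Z)%N ->
  2%:R / (3 * (Z * m.+1))%N%:R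
    <= (2 * m ^ 2 + 4 * m + 3)%N%:R / (3 * (m + 1) ^ 3 * Z)%N%:R :> rat.
Proof. by move=> Z_gt0; rewrite ler_nat_div ?muln_gt0 ?expn_gt0 ?Z_gt0 ?addn1 //; nia. Qed.

Lemma Delta_ge3 g k : (2 <= g)%N -> (2 <= k)%N -> (g + k < g * k)%N -> (3 <= Delta g k)%N.
Proof. rewrite /Delta; nia. Qed.

Lemma cells_le_Delta g k : (2 <= g)%N -> (2 <= k)%N -> (g + k < g * k)%N ->
  (3 * (g * k - g - k + 1) <= 2 * Delta g k)%N.
Proof. rewrite /Delta; nia. Qed.

Lemma cell_mul_le g k (x : 'I_g * 'I_k) : (g + k <= g * k)%N ->
  (x.1 * x.2 <= g * k - g - k + 1)%N.
Proof. case: x => i j /=; have := ltn_ord i; have := ltn_ord j; nia. Qed.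

Lemma sum_cell_mul gamma kappa :
  (\sum_(x : 'I_gamma * 'I_kappa) x.1 * x.2 = 'C(gamma, 2) * 'C(kappa, 2))%N.
Proof.
rewrite -(pair_bigA _ (fun (i : 'I_gamma) (j : 'I_kappa) => (i * j)%N)) /=.
under eq_bigr => i _ do rewrite -big_distrr.
by rewrite -big_distrl /= -!bin2_sum !big_mkord.
Qed.

Section CountBounds.

Variables (gamma kappa m Z : nat).
Hypotheses (Z_gt0 : (0 < Z)%N) (gamma_ge2 : (2 <= gamma)%N) (kappa_ge2 : (2 <= kappa)%N).
Hypothesis sum_lt_mul : (gamma + kappa < gamma * kappa)%N.

Local Notation M := (Z * m.+1)%N.
Local Notation K := (gamma * kappa - gamma - kappa)%N.
Local Notation D := (Delta gamma kappa).

Lemma Ncount_ge_prod (F : 'I_gamma * 'I_kappa -> rat) :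
  (forall x, 0 <= F x <= (M - x.1 * x.2)%N%:R) ->
  \prod_x F x <= (Ncount gamma kappa m Z)%:R.
Proof.
move=> F_le.
apply: le_trans (_ : (\prod_(x : 'I_gamma * 'I_kappa) (M - x.1 * x.2))%N%:R <= _ :> rat).
  by rewrite natr_prod; apply: ler_prod => x _; exact: F_le.
by rewrite ler_nat; exact: prod_le_Ncount.
Qed.

Lemma expr_card_cells (a : rat) : a ^+ (gamma * kappa) = \prod_(x : 'I_gamma * 'I_kappa) a.
Proof. by rewrite prodr_const card_prod !card_ord. Qed.

Lemma Ncount_geI : (4 * D <= 3 * M)%N ->
  M%:R ^+ (gamma * kappa) * (1 - 2%:R / D%:R) ^+ ('C(gamma, 2) * 'C(kappa, 2))
    <= (Ncount gamma kappa m Z)%:R :> rat.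
Proof.
move=> DM; have D_ge3 := Delta_ge3 gamma_ge2 kappa_ge2 sum_lt_mul.
have K_le := cells_le_Delta gamma_ge2 kappa_ge2 sum_lt_mul.
rewrite -sum_cell_mul -prodrXr expr_card_cells.
rewrite -big_split /=; apply: Ncount_ge_prod => x.
have x_le := cell_mul_le x (ltnW sum_lt_mul).
apply/andP; split; last by apply: cell_boundI; lia.
by rewrite mulr_ge0 ?exprn_ge0 // subr_ge0 ler_pdivrMr ?ltr0n ?mul1r ?ler_nat; lia.
Qed.

Lemma Ncount_geII : (4 * K <= M)%N ->
  M%:R ^+ (gamma * kappa) * (1 - (K + 1)%N%:R / (4 * K)%N%:R) ^+ (gamma * kappa)
    <= (Ncount gamma kappa m Z)%:R :> rat.
Proof.
move=> KM; have K_gt0 : (0 < K)%N by lia.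
rewrite -exprMn expr_card_cells.
apply: Ncount_ge_prod => x; have x_le := cell_mul_le x (ltnW sum_lt_mul).
apply/andP; split; last exact: cell_boundII.
by rewrite mulr_ge0 // subr_ge0 ler_pdivrMr ?ltr0n ?mul1r ?ler_nat; lia.
Qed.

Lemma Delta_le_of_boundI : 2%:R / (3 * M)%N%:R <= boundI gamma kappa -> (4 * D <= 3 * M)%N.
Proof.
have D_ge3 := Delta_ge3 gamma_ge2 kappa_ge2 sum_lt_mul.
have M_gt0 : (0 < 3 * M)%N by rewrite !muln_gt0 Z_gt0.
move=> /le_trans/(_ (boundI_le_inv (ltnW D_ge3))).
by rewrite ler_nat_div; [lia | exact: M_gt0 | lia].
Qed.

Lemma K_le_of_boundII : 2%:R / (3 * M)%N%:R <= boundII gamma kappa -> (4 * K <= M)%N.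
Proof.
have M_gt0 : (0 < 3 * M)%N by rewrite !muln_gt0 Z_gt0.
by rewrite /boundII -natrM ler_nat_div; [lia | exact: M_gt0 | lia].
Qed.

End CountBounds.

Theorem corollary1 (m Z gamma kappa : nat) :
  (1 <= Z)%N -> (2 <= gamma)%N -> (2 <= kappa)%N ->
  (gamma + kappa < gamma * kappa)%N ->
  ((2 * m ^ 2 + 4 * m + 3)%N%:R / ((3 * (m + 1) ^ 3 * Z)%N%:R : rat)
     <= Num.max (boundI gamma kappa) (boundII gamma kappa)) ->
  ((Z * (m + 1))%N%:R ^+ (gamma * kappa) *
     (if boundI gamma kappa > boundII gamma kappa then
        (1 - 2%:R / (Delta gamma kappa)%:R) ^+ ('C(gamma, 2) * 'C(kappa, 2))
      else
        (1 - (gamma * kappa - gamma - kappa + 1)%N%:R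
               / (4 * (gamma * kappa - gamma - kappa))%N%:R) ^+ (gamma * kappa))
   : rat) <= (Ncount gamma kappa m Z)%:R.
Proof.
move=> Z_gt0 gamma_ge2 kappa_ge2 sum_lt_mul hyp.
have ratio_le := le_trans (active_ratio_ge m Z_gt0) hyp.
rewrite addn1; case: (ltP (boundII gamma kappa) (boundI gamma kappa)) => [II_lt_I | I_le_II].
  apply: (Ncount_geI Z_gt0 gamma_ge2 kappa_ge2 sum_lt_mul).
  apply: (Delta_le_of_boundI Z_gt0 gamma_ge2 kappa_ge2 sum_lt_mul).
  by rewrite (max_l (ltW II_lt_I)) in ratio_le.
apply: (Ncount_geII Z_gt0 gamma_ge2 kappa_ge2 sum_lt_mul).
apply: (K_le_of_boundII Z_gt0 gamma_ge2 kappa_ge2 sum_lt_mul).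
by rewrite (max_r I_le_II) in ratio_le.
Qed.
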